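(* Let $\widetilde X$ be a pure $d$-multicomplex. The following are equivalent: (1) $\widetilde X$ is link-connected; (2) for every $-1\le j\le d-2$ and every $j$-multicell $\mathfrak a$ of $\widetilde X$ (for $j=-1$, $\mathfrak a$ is the empty multicell), any two $d$-multicells containing $\mathfrak a$ can be joined by a finite sequence of $d$-multicells, each containing $\mathfrak a$, such that any two consecutive ones contain a common $(d-1)$-multicell which itself contains $\mathfrak a$ (i.e. the link of $\mathfrak a$ is $(d-j-1)$-lower path connected).
   Context: A $d$-multicomplex is a triple $\widetilde X=(X,\mathsf m,\mathsf g)$: $X$ is a $d$-dimensional simplicial complex on a countable vertex set; $\mathsf m:X\to\mathbb N$ is a multiplicity function equal to $1$ on the empty cell and on vertices; the multicells are the pairs $(\tau,r)$ with $\tau\in X$, $1\le r\le \mathsf m(\tau)$, of dimension $\dim\tau$; and $\mathsf g$ assigns to every multicell $(\tau,r)$ and every codimension-one face $\sigma$ of $\tau$ a multicell $\mathsf g((\tau,r),\sigma)=(\sigma,s)$ (the copy of $\sigma$ glued to the boundary of $(\tau,r)$). Containment $\preceq$ is the reflexive–transitive closure of the relation ''$\mathfrak b=\mathsf g(\mathfrak a,\sigma)$ for some $\sigma$''. Consistency is required: if $\mathfrak b=(\sigma,s)$, $\mathfrak b'=(\sigma',s')$ are multicells of equal dimension contained in a common multicell and $\rho=\sigma\cap\sigma'$ has codimension one in both, then $\mathsf g(\mathfrak b,\rho)=\mathsf g(\mathfrak b',\rho)$. $\widetilde X$ is pure if every multicell is contained in some $d$-multicell. For a multicell $\mathfrak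 a$ of dimension $j\le d-2$, the $1$-skeleton of its link is the multigraph whose vertices are the $(j+1)$-multicells containing $\mathfrak a$ and whose edges are the $(j+2)$-multicells containing $\mathfrak a$, each joining the two $(j+1)$-multicells containing $\mathfrak a$ that it contains. $\widetilde X$ is link-connected if for every multicell $\mathfrak a$ of dimension at most $d-2$ (including the empty multicell) this multigraph is connected. *)

From mathcomp Require Import all_boot.
From Stdlib Require Import Relations.Relation_Operators.

Set Implicit Arguments.
Unset Strict Implicit.
Unset Printing Implicit Defensive.

(* Vertices are natural numbers (any countable vertex set, up to relabelling).
   A cell (simplex) is a finite set of vertices, represented canonically as a
   strictly increasing list of naturals; its dimension is [size tau - 1].     *)
Definition cell := seq nat.

(* A multicell (tau, r); it is a genuine multicell when tau is a cell of X and
   1 <= r <= m tau. *)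
Definition mcell := (cell * nat)%type.

Definition codim1 (sigma tau : cell) : Prop :=
  subseq sigma tau /\ (size sigma).+1 = size tau.

Definition is_simplicial_complex (d : nat) (X : cell -> Prop) : Prop :=
  [/\ forall tau, X tau -> sorted ltn tau,
      X [::],
      forall tau sigma, X tau -> subseq sigma tau -> X sigma,
      forall tau, X tau -> size tau <= d.+1
    & exists tau, X tau /\ size tau = d.+1].

Section Multicomplex.
Variables (X : cell -> Prop) (m : cell -> nat) (g : mcell -> cell -> nat).

Definition is_mcell (a : mcell) : Prop :=
  X a.1 /\ 1 <= a.2 <= m a.1.

Definition glue (a : mcell) (sigma : cell) : mcell := (sigma, g a sigma).

Definition step (b a : mcell) : Prop :=
  is_mcell a /\ exists sigma, codim1 sigma a.1 /\ b = glue a sigma.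

Definition contained (b a : mcell) : Prop := clos_refl_trans mcell step b a.

Definition cap (sigma sigma' : cell) : cell := [seq x <- sigma | x \in sigma'].

Definition consistent : Prop :=
  forall b b' c : mcell,
    is_mcell b -> is_mcell b' -> is_mcell c ->
    size b.1 = size b'.1 ->
    contained b c -> contained b' c ->
    codim1 (cap b.1 b'.1) b.1 -> codim1 (cap b.1 b'.1) b'.1 ->
    glue b (cap b.1 b'.1) = glue b' (cap b.1 b'.1).

End Multicomplex.

Definition is_multicomplex (d : nat) (X : cell -> Prop) (m : cell -> nat)
    (g : mcell -> cell -> nat) : Prop :=
  [/\ is_simplicial_complex d X,
      forall tau, X tau -> 1 <= m tau,
      m [::] = 1 /\ (forall v, X [:: v] -> m [:: v] = 1),
      forall a sigma, is_mcell X m a -> codim1 sigma a.1 ->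
        is_mcell X m (glue g a sigma)
    & consistent X m g].

Definition pure (d : nat) X m g : Prop :=
  forall a, is_mcell X m a ->
    exists c, [/\ is_mcell X m c, size c.1 = d.+1 & contained X m g a c].

(* 1-skeleton of the link of a multicell a with size a.1 = k (dimension k-1):
   vertices are the multicells u of size k+1 (dimension k) containing a;
   two vertices are adjacent when some multicell e of size k+2 containing a
   contains both of them. *)
Definition link_vertex X m g (a u : mcell) : Prop :=
  [/\ is_mcell X m u, size u.1 = (size a.1).+1 & contained X m g a u].

Definition link_adj X m g (a u v : mcell) : Prop :=
  [/\ link_vertex X m g a u, link_vertex X m g a v &
      exists e, [/\ is_mcell X m e, size e.1 = (size a.1).+2,
                    contained X m g a e, contained X m g u e
                  & contained X m g v e]].

(* link-connected: for every multicell a of dimension <= d-2 (i.e. size a.1 < d,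
   including the empty multicell), the 1-skeleton of its link is connected. *)
Definition link_connected (d : nat) X m g : Prop :=
  forall a, is_mcell X m a -> size a.1 < d ->
    forall u v, link_vertex X m g a u -> link_vertex X m g a v ->
      clos_refl_trans mcell (link_adj X m g a) u v.

Definition lower_adj (d : nat) X m g (a c c' : mcell) : Prop :=
  [/\ [/\ is_mcell X m c, size c.1 = d.+1 & contained X m g a c],
      [/\ is_mcell X m c', size c'.1 = d.+1 & contained X m g a c'] &
      exists f, [/\ is_mcell X m f, size f.1 = d,
                    contained X m g a f, contained X m g f c
                  & contained X m g f c']].

Definition links_lower_path_connected (d : nat) X m g : Prop :=
  forall a, is_mcell X m a -> size a.1 < d ->
    forall c c', is_mcell X m c -> size c.1 = d.+1 -> contained X m g a c ->
      is_mcell X m c' -> size c'.1 = d.+1 -> contained X m g a c' ->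
      clos_refl_trans mcell (lower_adj d X m g a) c c'.

From mathcomp Require Import all_boot.
From Stdlib Require Import Relations.Relation_Operators Relations.Operators_Properties.

Set Implicit Arguments.
Unset Strict Implicit.
Unset Printing Implicit Defensive.

(* Gluing gives a multicell a face over every subcell of its cell, and
   consistency makes that face unique.  Hence inside one multicell c, two
   vertices of the link of a are equal or adjacent: if they differ, the face of
   c over the union of their cells is the required edge.

   (1) -> (2) is a descending induction on the dimension of a.  Facets over a
   ridge are lower-adjacent through the ridge itself.  For
   smaller a, a link path u_0, ..., u_k of a (each edge inside a facet, by
   purity) lets one move from facets over u_0 to facets over u_k, each step
   being a lower path over u_i, which the induction hypothesis provides.

   (2) -> (1): along a lower path of facets over a, consecutive facets share a
   ridge over a, hence a common link vertex of a, so the link vertices of a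
   lying in these facets stay in one link component. *)

Lemma clos_rt_mono (A : Type) (R S : A -> A -> Prop) :
  (forall x y, R x y -> S x y) ->
  forall x y, clos_refl_trans A R x y -> clos_refl_trans A S x y.
Proof.
move=> RS x y; elim=> [u v /RS|u|u v w _ IHuv _ IHvw].
- exact: rt_step.
- exact: rt_refl.
- exact: rt_trans IHuv IHvw.
Qed.

Lemma clos_rt_invariant (A : Type) (R : A -> A -> Prop) (P : A -> Prop) :
  (forall x y, R x y -> P x -> P y) ->
  forall x y, clos_refl_trans A R x y -> P x -> P y.
Proof. by move=> RP x y; elim=> [u v /RP|//|u v w _ IHuv _ IHvw /IHuv/IHvw]. Qed.

Lemma subseq_size_eq (T : eqType) (s1 s2 : seq T) :
  subseq s1 s2 -> size s2 <= size s1 -> s1 = s2.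
Proof.
move=> s12 le21; apply/eqP; rewrite -(size_subseq_leqif s12).2.
by rewrite eqn_leq le21 size_subseq.
Qed.

Lemma subseq_of_sorted_subset (s1 s2 : seq nat) :
  sorted ltn s1 -> sorted ltn s2 -> {subset s1 <= s2} -> subseq s1 s2.
Proof.
move=> s1_sorted s2_sorted s12.
suff -> : s1 = [seq x <- s2 | x \in s1] by exact: filter_subseq.
apply: (irr_sorted_eq ltn_trans ltnn) => // [|x]; first exact: (sorted_filter ltn_trans).
by rewrite mem_filter; apply/esym/andb_idr/s12.
Qed.

Lemma cap_cofaces (s t t' : cell) : sorted ltn t -> sorted ltn t' ->
  codim1 s t -> codim1 s t' -> t <> t' -> cap t t' = s.
Proof.
move=> t_sorted t'_sorted [s_t size_t] [s_t' size_t'] neq_tt'.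
have s_cap : subseq s (cap t t').
  apply: subseq_of_sorted_subset => [||z zs].
  - exact: (subseq_sorted ltn_trans s_t t_sorted).
  - exact: (sorted_filter ltn_trans).
  - by rewrite mem_filter (mem_subseq s_t' zs) (mem_subseq s_t zs).
have cap_t : subseq (cap t t') t by exact: filter_subseq.
have [lt_cap_t|] := ltnP (size (cap t t')) (size t).
  by apply/esym/subseq_size_eq => //; rewrite -ltnS size_t.
move=> /(subseq_size_eq cap_t) cap_eq_t; case: neq_tt'.
apply: subseq_size_eq; last by rewrite -size_t -size_t'.
by apply: subseq_of_sorted_subset => // z; rewrite -cap_eq_t mem_filter => /andP[].
Qed.

Lemma union_cofaces (s u w c : cell) : sorted ltn c ->
  subseq u c -> subseq w c -> codim1 s u -> codim1 s w -> u != w ->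
  exists e : cell, [/\ subseq e c, size e = (size s).+2, subseq u e & subseq w e].
Proof.
move=> c_sorted u_c w_c [s_u size_u] [s_w size_w] neq_uw.
have u_sorted := subseq_sorted ltn_trans u_c c_sorted.
have w_sorted := subseq_sorted ltn_trans w_c c_sorted.
have c_uniq := sorted_uniq ltn_trans ltnn c_sorted.
have [/allP u_w|/allPn[x xu xNw]] := boolP (all [in w] u).
  case/eqP: neq_uw; apply: subseq_size_eq; last by rewrite -size_u -size_w.
  exact: subseq_of_sorted_subset.
have u_eq : x :: s =i u.
  have xNs : x \notin s by apply: contra xNw; apply: mem_subseq.
  apply: (uniq_min_size _ _ _).2; last by rewrite /= size_u.
  - by rewrite /= xNs (sorted_uniq ltn_trans ltnn (subseq_sorted ltn_trans s_u u_sorted)).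
  - by move=> z; rewrite inE => /predU1P[->//|]; apply: mem_subseq.
exists [seq z <- c | (z \in w) || (z == x)]; split.
- exact: filter_subseq.
- rewrite size_w -[RHS]/(size (x :: w)); apply/perm_size/uniq_perm.
  + exact: filter_uniq.
  + by rewrite /= xNw (sorted_uniq ltn_trans ltnn w_sorted).
  + move=> z; rewrite mem_filter inE orbC; have [->|_] /= := eqVneq z x.
      exact: mem_subseq u_c x xu.
    by apply/andb_idr/mem_subseq.
- rewrite subseq_filter u_c andbT; apply/allP => z.
  by rewrite -u_eq inE => /predU1P[->|/(mem_subseq s_w)->]; rewrite ?eqxx ?orbT.
- by rewrite subseq_filter w_c andbT; apply/allP => z ->.
Qed.

Section Multicomplex.
Variables (d : nat) (X : cell -> Prop) (m : cell -> nat) (g : mcell -> cell -> nat).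
Hypothesis X_multicomplex : is_multicomplex d X m g.

Local Notation is_mcell := (is_mcell X m).
Local Notation step := (step X m g).
Local Notation contained := (contained X m g).
Local Notation link_vertex := (link_vertex X m g).
Local Notation link_adj := (link_adj X m g).
Local Notation lower_adj := (lower_adj d X m g).

Lemma mcell_sorted a : is_mcell a -> sorted ltn a.1.
Proof. by case: X_multicomplex => -[X_sorted _ _ _ _] _ _ _ _ [/X_sorted]. Qed.

Lemma glue_mcell a s : is_mcell a -> codim1 s a.1 -> is_mcell (glue g a s).
Proof. by case: X_multicomplex => _ _ _ glue_ok _; apply: glue_ok. Qed.

Lemma step_inv b a : step b a -> [/\ is_mcell b, is_mcell a & codim1 b.1 a.1].
Proof. by case=> ma [s [s_a ->]]; split=> //; exact: glue_mcell. Qed.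

Lemma contained_trans a b c : contained a b -> contained b c -> contained a c.
Proof. exact: rt_trans. Qed.

Lemma contained_inv b c : contained b c ->
  [/\ is_mcell c -> is_mcell b, subseq b.1 c.1 & b = c \/ size b.1 < size c.1].
Proof.
elim=> {b c} [b a /step_inv[mb _ [ba <-]] | b | a b c _ [mab ab eab] _ [mbc bc ebc]].
- by split=> //; right.
- by split=> //; left.
- split=> [/mbc/mab //||]; first exact: subseq_trans ab bc.
  case: eab => [->|lt_ab] //; right; case: ebc => [<-|] //; exact: ltn_trans.
Qed.

Lemma contained_mcell b c : contained b c -> is_mcell c -> is_mcell b.
Proof. by case/contained_inv. Qed.

Lemma contained_subseq b c : contained b c -> subseq b.1 c.1.
Proof. by case/contained_inv. Qed.

Lemma contained_size_eq b c : contained b c -> size c.1 <= size b.1 -> b = c.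
Proof. by case/contained_inv => _ _ [//|]; rewrite ltnNge => /negP. Qed.

Lemma contained_first_step a c : contained a c -> size a.1 < size c.1 ->
  exists2 u, step a u & contained u c.
Proof.
move=> /(clos_rt_rt1n _ _ _ _)[|u c' au uc _]; first by rewrite ltnn.
by exists u => //; apply: clos_rt1n_rt.
Qed.

Lemma face_unique b b' c : is_mcell c ->
  contained b c -> contained b' c -> b.1 = b'.1 -> b = b'.
Proof.
move=> mc; move Hn: (size c.1 - size b.1) => n.
elim: n b b' Hn => [|n IHn] b b' Hn bc b'c eq_bb'.
  have le_cb : size c.1 <= size b.1 by rewrite -subn_eq0 Hn.
  by rewrite (contained_size_eq bc le_cb) (contained_size_eq b'c) // -eq_bb'.
have lt_bc : size b.1 < size c.1 by rewrite -subn_gt0 Hn.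
have [t [mt [s [s_t def_b]]] tc] := contained_first_step bc lt_bc.
have lt_b'c : size b'.1 < size c.1 by rewrite -eq_bb'.
have [t' [mt' [s' [s'_t' def_b']]] t'c] := contained_first_step b'c lt_b'c.
subst b b'; move: eq_bb' s'_t' => /= <- s_t'.
have [eq_tt'|neq_tt'] := eqVneq t.1 t'.1.
  have Hn_t : size c.1 - size t.1 = n by rewrite -s_t.2 subnS Hn.
  by rewrite (IHn t t' Hn_t tc t'c eq_tt').
have cap_tt' : cap t.1 t'.1 = s by apply: cap_cofaces; rewrite ?mcell_sorted //; apply/eqP.
case: X_multicomplex => _ _ _ _ consistent_g.
have := consistent_g t t' c mt mt' mc _ tc t'c; rewrite cap_tt'; apply=> //.
by rewrite -s_t.2 -s_t'.2.
Qed.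

Lemma face_exists c s : is_mcell c -> subseq s c.1 ->
  exists2 b, b.1 = s & contained b c.
Proof.
move Hn: (size c.1 - size s) => n; elim: n c Hn => [|n IHn] c Hn mc s_c.
  exists c; last exact: rt_refl.
  by apply/esym/subseq_size_eq => //; rewrite -subn_eq0 Hn.
have c_uniq := sorted_uniq ltn_trans ltnn (mcell_sorted mc).
have [/allP c_s|/allPn[x xc xNs]] := boolP (all [in s] c.1).
  suff: size c.1 <= size s by rewrite -subn_eq0 Hn.
  exact: uniq_leq_size.
have t_c : codim1 (rem x c.1) c.1.
  by split; [exact: rem_subseq | rewrite size_rem // prednK //; case: (c.1) xc].
have s_t : subseq s (rem x c.1) by rewrite -(rem_id xNs); exact: subseq_rem.
have Hn_t : size (rem x c.1) - size s = n by rewrite size_rem // -subn1 subnAC Hn subn1.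
have [b bs bt] := IHn (glue g c (rem x c.1)) Hn_t (glue_mcell mc t_c) s_t.
exists b => //; apply: contained_trans bt (rt_step _ _ _ _ _).
by split=> //; exists (rem x c.1).
Qed.

Lemma contained_of_subseq b e c : is_mcell c ->
  contained b c -> contained e c -> subseq b.1 e.1 -> contained b e.
Proof.
move=> mc bc ec be.
have [b' eq_b'b b'e] := face_exists (contained_mcell ec mc) be.
by rewrite (face_unique mc bc (contained_trans b'e ec) (esym eq_b'b)).
Qed.

Lemma link_path_in_mcell a u w c : is_mcell c ->
  link_vertex a u -> link_vertex a w -> contained u c -> contained w c ->
  clos_refl_trans mcell (link_adj a) u w.
Proof.
move=> mc hu hw uc wc; case: (hu) (hw) => _ size_u au [_ size_w aw].
have [eq_uw|neq_uw] := eqVneq u.1 w.1.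
  by rewrite (face_unique mc uc wc eq_uw); exact: rt_refl.
have a_u : codim1 a.1 u.1 by split; [exact: contained_subseq | rewrite size_u].
have a_w : codim1 a.1 w.1 by split; [exact: contained_subseq | rewrite size_w].
have [e_cell [e_c size_e u_e w_e]] := union_cofaces (mcell_sorted mc)
  (contained_subseq uc) (contained_subseq wc) a_u a_w neq_uw.
have [e def_e ec] := face_exists mc e_c; subst e_cell.
have ue := contained_of_subseq mc uc ec u_e.
apply: rt_step; split=> //; exists e; split=> //.
- exact: contained_mcell ec mc.
- exact: contained_trans au ue.
- exact: contained_of_subseq mc wc ec w_e.
Qed.

Lemma link_vertex_of_step a u : step a u -> link_vertex a u.
Proof.
move=> au; have [_ mu [_ size_u]] := step_inv au.
by split; [|rewrite size_u|exact: rt_step].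
Qed.

Lemma lower_path_mono a w c c' : contained a w ->
  clos_refl_trans mcell (lower_adj w) c c' -> clos_refl_trans mcell (lower_adj a) c c'.
Proof.
move=> aw; apply: clos_rt_mono => {}c {}c' [[mc sc wc] [mc' sc' wc'] [f [mf sf wf fc fc']]].
by split; [split|split|exists f; split] => //; apply: contained_trans aw _.
Qed.

Definition facet_over a c := [/\ is_mcell c, size c.1 = d.+1 & contained a c].

Definition lower_connected a := forall c c',
  facet_over a c -> facet_over a c' -> clos_refl_trans mcell (lower_adj a) c c'.

Lemma lower_connected_ridge f : is_mcell f -> size f.1 = d -> lower_connected f.
Proof.
move=> mf sf c c' fc fc'; apply: rt_step; split=> //.
case: fc fc' => _ _ fc [_ _ fc']; exists f; split=> //; exact: rt_refl.
Qed.

Hypothesis X_pure : pure d X m g.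

Lemma lower_connected_of_link a : size a.1 < d ->
  (forall u v, link_vertex a u -> link_vertex a v ->
     clos_refl_trans mcell (link_adj a) u v) ->
  (forall w, link_vertex a w -> lower_connected w) -> lower_connected a.
Proof.
move=> lt_ad link_conn lower_conn c c' [mc sc ac] [mc' sc' ac'].
have lt_ac : size a.1 < size c.1 by rewrite sc ltnW.
have lt_ac' : size a.1 < size c'.1 by rewrite sc' ltnW.
have [u au uc] := contained_first_step ac lt_ac.
have [u' au' u'c'] := contained_first_step ac' lt_ac'.
have lift w c1 c2 : link_vertex a w -> facet_over w c1 -> facet_over w c2 ->
    clos_refl_trans mcell (lower_adj a) c1 c2.
  move=> hw wc1 wc2; case: (hw) => _ _ aw.
  exact: lower_path_mono aw (lower_conn w hw c1 c2 wc1 wc2).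
pose P w := forall c'', facet_over w c'' -> clos_refl_trans mcell (lower_adj a) c c''.
have Pu : P u by move=> c'' uc''; apply: lift (link_vertex_of_step au) _ uc''.
have Pstep y z : link_adj a y z -> P y -> P z.
  move=> [hy hz [e [me _ _ ye ze]]] Py c'' zc''.
  have [ce [mce sce ece]] := X_pure me.
  apply: rt_trans (Py ce _) (lift z ce c'' hz _ zc'').
  - by split=> //; exact: contained_trans ye ece.
  - by split=> //; exact: contained_trans ze ece.
have uu' := link_conn u u' (link_vertex_of_step au) (link_vertex_of_step au').
exact: (clos_rt_invariant (P := P) Pstep uu' Pu) c' (And3 mc' sc' u'c').
Qed.

Lemma lower_connected_of_link_connected : link_connected d X m g ->
  forall a, is_mcell a -> size a.1 <= d -> lower_connected a.
Proof.
move=> link_conn a ma le_ad; move Hn: (d - size a.1) => n.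
elim: n a ma le_ad Hn => [|n IHn] a ma le_ad Hn.
  by apply: lower_connected_ridge => //; apply/eqP; rewrite eqn_leq le_ad -subn_eq0 Hn.
have lt_ad : size a.1 < d by rewrite -subn_gt0 Hn.
apply: lower_connected_of_link => // [|w [mw sw _]]; first exact: link_conn.
by apply: IHn => //; rewrite sw // subnS Hn.
Qed.

Lemma link_connected_of_lower_connected :
  (forall a, is_mcell a -> size a.1 < d -> lower_connected a) -> link_connected d X m g.
Proof.
move=> lower_conn a ma lt_ad u v hu hv.
case: (hu) (hv) => mu _ au [mv _ av].
have [cu [mcu scu ucu]] := X_pure mu.
have [cv [mcv scv vcv]] := X_pure mv.
pose P c := forall w, link_vertex a w -> contained w c ->
  clos_refl_trans mcell (link_adj a) u w.
have Pcu : P cu by move=> w hw wcu; exact: link_path_in_mcell mcu hu hw ucu wcu.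
have Pstep y z : lower_adj a y z -> P y -> P z.
  move=> [_ [mz _ _] [f [_ sf af fy fz]]] Py w hw wz.
  have lt_af : size a.1 < size f.1 by rewrite sf.
  have [w0 aw0 w0f] := contained_first_step af lt_af.
  have hw0 := link_vertex_of_step aw0.
  apply: rt_trans (Py w0 hw0 (contained_trans w0f fy)) _.
  exact: link_path_in_mcell mz hw0 hw (contained_trans w0f fz) wz.
have cucv := lower_conn a ma lt_ad cu cv
  (And3 mcu scu (contained_trans au ucu)) (And3 mcv scv (contained_trans av vcv)).
exact: (clos_rt_invariant (P := P) Pstep cucv Pcu) v hv vcv.
Qed.

End Multicomplex.

Theorem proposition3 (d : nat) (X : cell -> Prop) (m : cell -> nat)
    (g : mcell -> cell -> nat) :
  is_multicomplex d X m g -> pure d X m g ->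
  (link_connected d X m g <-> links_lower_path_connected d X m g).
Proof.
move=> X_mc X_pure; split=> [link_conn | lower_conn].
- move=> a ma lt_ad c c' mc sc ac mc' sc' ac'.
  exact: (lower_connected_of_link_connected X_mc X_pure link_conn ma (ltnW lt_ad)).
- apply: (link_connected_of_lower_connected X_mc X_pure) => a ma lt_ad c c' [? ? ?] [? ? ?].
  exact: lower_conn.
Qed.
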